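(* Let $n$ be a positive integer and let $a\in\mathcal{T}_n$ have rank $n-1$. Then $\mu(\mathcal{T}_n^a)=n+1$.
   Context: For a positive integer $m$, $\mathcal{T}_m$ is the semigroup of all functions $\{1,\ldots,m\}\to\{1,\ldots,m\}$ under composition; $\operatorname{rank}(f)=|\operatorname{im}(f)|$. For a semigroup $S$ and $a\in S$, the variant $S^a$ is the set $S$ with operation $x\star_a y=xay$. For a finite semigroup $S$, the minimal degree $\mu(S)$ is the least positive integer $m$ such that $S$ embeds (via an injective homomorphism) in $\mathcal{T}_m$. *)

From mathcomp Require Import all_boot.
Set Implicit Arguments. Unset Strict Implicit. Unset Printing Implicit Defensive.

(* Convention: (f * g)(x) = f (g x).  (Using the other convention
   consistently throughout yields the same minimal degrees.) *)
Definition Tmap (m : nat) := {ffun 'I_m -> 'I_m}.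

Definition tmul (m : nat) (f g : Tmap m) : Tmap m := [ffun x => f (g x)].

Definition trank (m : nat) (f : Tmap m) : nat := #|[set f x | x in 'I_m]|.

Definition variant_op (m : nat) (a : Tmap m) (x y : Tmap m) : Tmap m :=
  tmul (tmul x a) y.

Definition embeds_in_T (S : Type) (op : S -> S -> S) (m : nat) : Prop :=
  exists phi : S -> Tmap m,
    injective phi /\ forall x y, phi (op x y) = tmul (phi x) (phi y).

Definition minimal_degree_is (S : Type) (op : S -> S -> S) (d : nat) : Prop :=
  0 < d /\ embeds_in_T op d /\
  forall m, 0 < m -> embeds_in_T op m -> d <= m.

From mathcomp Require Import all_boot.

Set Implicit Arguments. Unset Strict Implicit. Unset Printing Implicit Defensive.

(* Upper bound: whenever a = sigma o iota with iota : [n] -> [m] injective and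
   sigma : [m] -> [n] surjective, x |-> iota o x o sigma is an injective
   homomorphism T_n^a -> T_m, since sigma o iota reproduces the sandwich
   element.  A map of rank n - 1 factors in this way through [n + 1]: iota
   misses one point, which sigma sends to the point missing from im a.
   Lower bound: T_n^a has n^n elements and m^m < n^n for 0 < m < n, so an
   embedding into T_m with m <= n forces m = n; it is then bijective, and the
   preimage e of the identity satisfies e a y = y for all y, so a is
   injective, i.e. has rank n. *)

Section SandwichEmbedding.

Variables (n m : nat) (a : Tmap n) (iota : 'I_n -> 'I_m) (sigma : 'I_m -> 'I_n).
Hypotheses (sigma_iota : forall j, sigma (iota j) = a j)
           (iota_inj : injective iota) (sigma_surj : forall x, exists i, sigma i = x).

Definition sandwich (x : Tmap n) : Tmap m := [ffun i => iota (x (sigma i))].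

Lemma sandwich_mul x y :
  sandwich (variant_op a x y) = tmul (sandwich x) (sandwich y).
Proof. by apply/ffunP => i; rewrite !ffunE sigma_iota. Qed.

Lemma sandwich_inj : injective sandwich.
Proof.
move=> x y /ffunP eq_xy; apply/ffunP => w.
have [i <-] := sigma_surj w.
by apply: iota_inj; have := eq_xy i; rewrite !ffunE.
Qed.

Lemma variant_embeds_of_factorization : embeds_in_T (variant_op a) m.
Proof. by exists sandwich; split; [exact: sandwich_inj | exact: sandwich_mul]. Qed.

End SandwichEmbedding.

Lemma setU1_image_full (n : nat) (a : Tmap n) :
  0 < n -> n.-1 <= trank a -> exists z, z |: [set a x | x in 'I_n] = setT.
Proof.
move=> n_gt0 rank_a; set A := [set a x | x in 'I_n].
have [z zA | A_full] := pickP (fun z => z \notin A).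
  exists z; apply/eqP; rewrite eqEcard subsetT cardsU1 zA cardsT card_ord.
  by rewrite add1n (leq_trans (leqSpred n)) // ltnS; exact: rank_a.
exists (Ordinal n_gt0); apply/setP => w.
by rewrite in_setT in_setU1 (negbFE (A_full w)) orbT.
Qed.

Lemma variant_embeds_succ (n : nat) (a : Tmap n) :
  0 < n -> n.-1 <= trank a -> embeds_in_T (variant_op a) n.+1.
Proof.
move=> n_gt0 rank_a; have [z full] := setU1_image_full n_gt0 rank_a.
pose sigma i := if unlift ord_max i is Some j then a j else z.
apply: (@variant_embeds_of_factorization _ _ _ (lift ord_max) sigma).
- by move=> j; rewrite /sigma liftK.
- exact: lift_inj.
move=> w; have : w \in z |: [set a x | x in 'I_n] by rewrite full inE.
case/setU1P => [-> | /imsetP [j _ ->]].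
  by exists ord_max; rewrite /sigma unlift_none.
by exists (lift ord_max j); rewrite /sigma liftK.
Qed.

Lemma expnn_ltn (m n : nat) : 0 < m -> m < n -> m ^ m < n ^ n.
Proof.
move=> m_gt0 lt_mn.
have n_gt1 : 1 < n by exact: leq_trans lt_mn.
apply: (@leq_trans (n ^ m)); first by rewrite ltn_exp2r.
by rewrite leq_exp2l // ltnW.
Qed.

Lemma card_le_of_embeds (S : finType) (op : S -> S -> S) (m : nat) :
  embeds_in_T op m -> #|S| <= m ^ m.
Proof.
by case=> phi [phi_inj _]; have := leq_card phi phi_inj; rewrite card_ffun !card_ord.
Qed.

Lemma variant_embeds_same_degree (n : nat) (a : Tmap n) :
  embeds_in_T (variant_op a) n -> injective a.
Proof.
case=> phi [phi_inj phi_mul].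
have [psi _ phi_psi] := injF_bij phi_inj.
set e := psi [ffun x => x].
have e_left_id y : variant_op a e y = y.
  by apply: phi_inj; rewrite phi_mul phi_psi; apply/ffunP => x; rewrite !ffunE.
have /ffunP ea_id := e_left_id [ffun x => x].
move=> x1 x2 eq_a; have := ea_id x1; have := ea_id x2.
by rewrite !ffunE /= eq_a => -> ->.
Qed.

Lemma variant_embeds_gt (n m : nat) (a : Tmap n) :
  ~ injective a -> 0 < m -> embeds_in_T (variant_op a) m -> n < m.
Proof.
move=> a_ninj m_gt0 emb; rewrite ltnNge; apply/negP.
rewrite leq_eqVlt => /orP [/eqP eq_mn | lt_mn].
  by subst m; exact/a_ninj/variant_embeds_same_degree.
have := card_le_of_embeds emb; rewrite card_ffun card_ord => card_le.
by have := leq_trans (expnn_ltn m_gt0 lt_mn) card_le; rewrite ltnn.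
Qed.

Lemma trank_inj (n : nat) (a : Tmap n) : injective a -> trank a = n.
Proof. by move=> a_inj; rewrite /trank card_imset // card_ord. Qed.

Theorem proposition4p3 (n : nat) (a : Tmap n) :
  0 < n -> trank a = n.-1 ->
  minimal_degree_is (variant_op a) n.+1.
Proof.
move=> n_gt0 rank_a; split=> //; split.
  by apply: variant_embeds_succ => //; rewrite rank_a.
have rank_lt : trank a < n by rewrite rank_a prednK.
move=> m m_gt0; apply: variant_embeds_gt m_gt0 => /trank_inj rank_n.
by rewrite rank_n ltnn in rank_lt.
Qed.
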